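(* For every integer $k\ge 2$ and $n=\frac{k(2k^2+1)}{3}$, $$6n-\sqrt[3]{486}\,n^{2/3} < C_{fcc}(n)\le C(n).$$
   Context: A packing of unit balls in $\mathbb{E}^3$ is a family of closed unit balls with pairwise disjoint interiors; its contact number is the number of unordered pairs of balls whose centers are at distance exactly $2$. $C(n)$ is the maximum contact number over all packings of $n$ unit balls in $\mathbb{E}^3$. $\Lambda_{fcc}$ denotes the face-centered cubic lattice scaled so that its shortest non-zero vector has length $2$ (e.g. the set of integer points $(x,y,z)\in\mathbb{Z}^3$ with $x+y+z$ even, scaled by $\sqrt{2}$), and $C_{fcc}(n)$ is the largest contact number among packings of $n$ unit balls whose centers all lie in $\Lambda_{fcc}$. *)

From Stdlib Require Import Reals Lra Lia ZArith Arith.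
Open Scope R_scope.

Definition point3 : Type := (R * R * R)%type.

Definition dist3 (p q : point3) : R :=
  let '(x1, y1, z1) := p in
  let '(x2, y2, z2) := q in
  sqrt ((x1 - x2) ^ 2 + (y1 - y2) ^ 2 + (z1 - z2) ^ 2).

(* A packing of n unit balls is given by the family of its n centers
   f 0, ..., f (n-1); closed unit balls have pairwise disjoint interiors
   iff distinct centers are at distance >= 2. *)
Definition is_packing (n : nat) (f : nat -> point3) : Prop :=
  forall i j : nat, (i < n)%nat -> (j < n)%nat -> i <> j -> 2 <= dist3 (f i) (f j).

Definition touch (p q : point3) : nat :=
  if Req_EM_T (dist3 p q) 2 then 1%nat else 0%nat.

Fixpoint sum_nat (m : nat) (g : nat -> nat) : nat :=
  match m with
  | O => O
  | S m' => (sum_nat m' g + g m')%nat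
  end.

Definition contact_number (n : nat) (f : nat -> point3) : nat :=
  sum_nat n (fun j => sum_nat j (fun i => touch (f i) (f j))).

(* The face-centered cubic lattice scaled so that its minimal distance is 2:
   sqrt 2 * {(a,b,c) in Z^3 | a + b + c even}. *)
Definition in_fcc (p : point3) : Prop :=
  exists a b c : Z, Z.Even (a + b + c)%Z /\
    p = (sqrt 2 * IZR a, sqrt 2 * IZR b, sqrt 2 * IZR c).

Definition is_C (n c : nat) : Prop :=
  (exists f, is_packing n f /\ contact_number n f = c) /\
  (forall f, is_packing n f -> (contact_number n f <= c)%nat).

Definition is_Cfcc (n c : nat) : Prop :=
  (exists f, is_packing n f /\ (forall i, (i < n)%nat -> in_fcc (f i)) /\
             contact_number n f = c) /\
  (forall f, is_packing n f -> (forall i, (i < n)%nat -> in_fcc (f i)) ->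
             (contact_number n f <= c)%nat).

(* The packing is the octahedron of the fcc lattice with k balls along each edge: a stack of
   square layers of sides 1, 2, ..., k, ..., 2, 1, hence n = k (2 k^2 + 1) / 3 balls.  List its
   balls layer by layer in lexicographic order.  Among the twelve neighbours of a ball x, the six
   of the form x - d with d lexicographically positive come earlier, and counting those present
   layer by layer gives 2 (k - 1) k (2 k - 1) = 6 n - 6 k^2 contacts.  Finally
   6 k^2 < 486^(1/3) n^(2/3) because 216 k^6 < 486 n^2, and the maxima C(n) and C_fcc(n) exist
   because n balls have at most n^2 contacts. *)

From Pilot Require Import Defs.
From Stdlib Require Import Reals Lra Lia ZArith Arith List Sorted Bool Classical.
Import ListNotations.
(* [Reals] also exports a [sum_nat]; the one of [Defs] must take precedence. *)
Import Defs.
Open Scope R_scope.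

Definition zpt : Type := (Z * Z * Z)%type.

Definition zsub (x y : zpt) : zpt :=
  let '(a, b, t) := x in let '(a', b', t') := y in (a - a', b - b', t - t')%Z.

Definition zero : zpt := (0, 0, 0)%Z.

(* [(a, b, t) |-> sqrt 2 (t - a - b, b - a, t)] maps [Z^3] bijectively onto the lattice, and
   [fcc_sqnorm d] is half the squared length of the image of [d]. *)
Definition fcc (x : zpt) : point3 :=
  let '(a, b, t) := x in
  (sqrt 2 * IZR (t - a - b), sqrt 2 * IZR (b - a), sqrt 2 * IZR t).

Definition fcc_sqnorm (d : zpt) : Z :=
  let '(a, b, t) := d in ((t - a - b) * (t - a - b) + (b - a) * (b - a) + t * t)%Z.

Lemma Z_abs_le_square (z : Z) : (z <= z * z /\ - z <= z * z)%Z.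
Proof. split; nia. Qed.

(* The three coordinates have even sum, so they cannot have squared norm 1. *)
Lemma fcc_sqnorm_ge2 (d : zpt) : d <> (0, 0, 0)%Z -> (2 <= fcc_sqnorm d)%Z.
Proof.
  destruct d as [[a b] t]; cbn; intros Hd.
  pose proof (Z_abs_le_square (t - a - b)); pose proof (Z_abs_le_square (b - a));
    pose proof (Z_abs_le_square t).
  destruct (Z_lt_le_dec (fcc_sqnorm (a, b, t)) 2) as [Hlt | ]; [exfalso; cbn in Hlt | assumption].
  apply Hd. f_equal; [f_equal |]; lia.
Qed.

Lemma dist3_fcc (x y : zpt) : dist3 (fcc x) (fcc y) = sqrt (2 * IZR (fcc_sqnorm (zsub x y))).
Proof.
  destruct x as [[a b] t], y as [[a' b'] t']; unfold dist3, fcc, fcc_sqnorm, zsub.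
  f_equal.
  assert (Hs : sqrt 2 * sqrt 2 = 2) by (apply sqrt_sqrt; lra).
  rewrite !plus_IZR, !mult_IZR, !minus_IZR.
  set (s := sqrt 2) in *. rewrite <- Hs at 1. ring.
Qed.

Lemma dist3_fcc_ge2 (x y : zpt) : x <> y -> 2 <= dist3 (fcc x) (fcc y).
Proof.
  intros Hxy. rewrite dist3_fcc, <- (sqrt_square 2) at 1 by lra.
  apply sqrt_le_1_alt.
  enough (2 <= IZR (fcc_sqnorm (zsub x y))) by lra.
  apply IZR_le, fcc_sqnorm_ge2.
  destruct x as [[a b] t], y as [[a' b'] t']; cbn; intros E; injection E as Ea Eb Et.
  apply Hxy. f_equal; [f_equal |]; lia.
Qed.

Lemma touch_fcc (x y : zpt) : fcc_sqnorm (zsub x y) = 2%Z -> touch (fcc x) (fcc y) = 1%nat.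
Proof.
  intros H2. unfold touch. rewrite dist3_fcc, H2.
  destruct Req_EM_T as [| Hne]; [reflexivity | exfalso; apply Hne].
  replace (2 * IZR 2) with (2 * 2) by (cbn; ring). apply sqrt_square; lra.
Qed.

Lemma in_fcc_fcc (x : zpt) : in_fcc (fcc x).
Proof.
  destruct x as [[a b] t]. exists (t - a - b)%Z, (b - a)%Z, t. split; [| reflexivity].
  exists (t - a)%Z. ring.
Qed.

Local Open Scope nat_scope.

Lemma sum_nat_ext (n : nat) (g h : nat -> nat) :
  (forall i, i < n -> g i = h i) -> sum_nat n g = sum_nat n h.
Proof. induction n; intros H; cbn; [reflexivity |]. rewrite IHn, H; auto. Qed.

Lemma sum_nat_nth {A} (g : A -> nat) (a0 : A) (l : list A) :
  sum_nat (length l) (fun i => g (nth i l a0)) = list_sum (map g l).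
Proof.
  induction l as [| x l IH] using rev_ind; [reflexivity |].
  rewrite length_app, Nat.add_1_r, map_app, list_sum_app; cbn.
  rewrite app_nth2, Nat.sub_diag by lia.
  rewrite (sum_nat_ext _ _ (fun i => g (nth i l a0))), IH; [cbn; lia |].
  intros i Hi. rewrite app_nth1; auto.
Qed.

Lemma contact_number_snoc {A} (f : A -> point3) (a0 : A) (l : list A) (x : A) :
  contact_number (length (l ++ [x])) (fun i => f (nth i (l ++ [x]) a0)) =
  contact_number (length l) (fun i => f (nth i l a0)) + list_sum (map (fun y => touch (f y) (f x)) l).
Proof.
  rewrite length_app, Nat.add_1_r. unfold contact_number at 1. cbn [sum_nat].
  rewrite app_nth2, Nat.sub_diag by lia. cbn [nth]. f_equal.
  - apply sum_nat_ext. intros j Hj. apply sum_nat_ext. intros i Hi.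
    rewrite !app_nth1 by lia. reflexivity.
  - rewrite <- (sum_nat_nth (fun y => touch (f y) (f x)) a0).
    apply sum_nat_ext. intros i Hi. rewrite app_nth1; auto.
Qed.

Lemma length_le_list_sum {A} (g : A -> nat) (B l : list A) :
  NoDup B -> incl B l -> (forall y, In y B -> 1 <= g y) -> length B <= list_sum (map g l).
Proof.
  intros HB Hincl Hg. transitivity (length (filter (fun y => 1 <=? g y) l)).
  - apply NoDup_incl_length; [assumption |].
    intros y Hy. apply filter_In. split; [auto | apply Nat.leb_le; auto].
  - clear. induction l as [| y l IH]; cbn [filter map length]; [cbn; lia |].
    change (list_sum (g y :: map g l)) with (g y + list_sum (map g l)).
    destruct (Nat.leb_spec 1 (g y)); cbn [length]; lia.
Qed.

Lemma contact_number_ge {A} (f : A -> point3) (a0 : A) (L : list A) (B : A -> list A) :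
  (forall P x S, L = P ++ x :: S ->
     NoDup (B x) /\ incl (B x) P /\ forall y, In y (B x) -> touch (f y) (f x) = 1) ->
  list_sum (map (fun x => length (B x)) L) <= contact_number (length L) (fun i => f (nth i L a0)).
Proof.
  intros HB.
  enough (Hpre : forall P S, L = P ++ S ->
    list_sum (map (fun x => length (B x)) P) <= contact_number (length P) (fun i => f (nth i P a0)))
    by (apply (Hpre L []); rewrite app_nil_r; reflexivity).
  intros P. induction P as [| x P IH] using rev_ind; intros S HL; [cbn; lia |].
  rewrite <- app_assoc in HL. destruct (HB P x S HL) as (Hnd & Hincl & Htouch).
  rewrite contact_number_snoc, map_app, list_sum_app; cbn.
  specialize (IH _ HL).
  enough (length (B x) <= list_sum (map (fun y => touch (f y) (f x)) P)) by lia.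
  apply length_le_list_sum; auto. intros y Hy. rewrite Htouch; auto.
Qed.

Lemma sum_nat_le (n c : nat) (g : nat -> nat) : (forall i, i < n -> g i <= c) -> sum_nat n g <= n * c.
Proof.
  induction n as [| n IH]; intros Hg; cbn; [lia |].
  specialize (IH (fun i Hi => Hg i ltac:(lia))). specialize (Hg n). lia.
Qed.

Lemma contact_number_le_square (n : nat) (f : nat -> point3) : contact_number n f <= n * n.
Proof.
  apply sum_nat_le. intros j Hj. transitivity (j * 1); [| nia].
  apply sum_nat_le. intros i _. unfold touch. destruct Req_EM_T; lia.
Qed.

Lemma nat_max_exists (P : nat -> Prop) (B : nat) :
  (exists x, P x) -> (forall x, P x -> x <= B) -> exists c, P c /\ forall x, P x -> x <= c.
Proof.
  revert P. induction B as [| B IH]; intros P [x Hx] HB.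
  - exists x. split; [assumption |]. intros y Hy. specialize (HB y Hy). lia.
  - destruct (classic (P (S B))) as [HSB | HSB]; [now exists (S B) |].
    apply IH; [now exists x |]. intros y Hy. specialize (HB y Hy).
    destruct (Nat.eq_dec y (S B)) as [-> |]; [contradiction | lia].
Qed.

Lemma max_contact_number_exists (n : nat) (Q : (nat -> point3) -> Prop) (f0 : nat -> point3) :
  is_packing n f0 -> Q f0 ->
  exists c, (exists f, is_packing n f /\ Q f /\ contact_number n f = c) /\
            forall f, is_packing n f -> Q f -> contact_number n f <= c.
Proof.
  intros Hf0 HQ.
  destruct (nat_max_exists (fun c => exists f, is_packing n f /\ Q f /\ contact_number n f = c) (n * n))
    as (c & Hc & Hmax).
  - now exists (contact_number n f0), f0.
  - intros x (f & _ & _ & <-). apply contact_number_le_square.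
  - exists c. split; [assumption |]. intros f Hf HQf. apply Hmax. now exists f.
Qed.

Lemma list_sum_map_linear {A} (x y z : nat) (u v : A -> nat) (l : list A) :
  list_sum (map (fun b => x + y * u b + z * v b) l) =
  length l * x + y * list_sum (map u l) + z * list_sum (map v l).
Proof.
  induction l as [| w l IH]; cbn; [lia |].
  change (fold_right Nat.add 0) with list_sum. rewrite IH. nia.
Qed.

Lemma list_sum_square {A} (u v : A -> nat) (l : list A) :
  list_sum (map (fun a => list_sum (map (fun b => u a + u b + v a * v b) l)) l) =
  2 * length l * list_sum (map u l) + list_sum (map v l) * list_sum (map v l).
Proof.
  rewrite (map_ext _ (fun a => list_sum (map u l) + length l * u a + list_sum (map v l) * v a)).
  - rewrite list_sum_map_linear. lia.
  - intros a. rewrite (map_ext _ (fun b => u a + 1 * u b + v a * v b)) by (intros; lia).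
    rewrite list_sum_map_linear. lia.
Qed.

Lemma list_sum_flat_map {A B} (g : B -> nat) (F : A -> list B) (l : list A) :
  list_sum (map g (flat_map F l)) = list_sum (map (fun x => list_sum (map g (F x))) l).
Proof. induction l as [| x l IH]; cbn; [reflexivity |]. now rewrite map_app, list_sum_app, IH. Qed.

Lemma list_sum_seq_reflect (f : nat -> nat) (a n : nat) :
  list_sum (map (fun t => f (a + n - t)) (seq a n)) = list_sum (map (fun i => f (S i)) (seq 0 n)).
Proof.
  revert a. induction n as [| n IH]; intros a; [reflexivity |].
  rewrite (seq_S n 0), map_app, list_sum_app, <- (IH (S a)). cbn [seq map list_sum fold_right].
  replace (a + S n - a) with (S n) by lia.
  rewrite (map_ext (fun t => f (a + S n - t)) (fun t => f (S a + n - t))) by (intros; f_equal; lia).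
  change (fold_right Nat.add 0) with list_sum. rewrite Nat.add_0_l. lia.
Qed.

Lemma list_sum_seq_split (F flo fup : nat -> nat) (m : nat) :
  (forall t, t <= m -> F t = flo t) -> (forall i, i < m -> F (2 * m - i) = fup i) ->
  list_sum (map F (seq 0 (2 * m + 1))) = list_sum (map flo (seq 0 (S m))) + list_sum (map fup (seq 0 m)).
Proof.
  intros Hlo Hup. replace (2 * m + 1) with (S m + m) by lia.
  rewrite seq_app, map_app, list_sum_app. f_equal.
  - f_equal. apply map_ext_in. intros t Ht%in_seq. apply Hlo. lia.
  - transitivity (list_sum (map (fun t => fup (pred (S m + m - t))) (seq (S m) m))).
    2:{ exact (list_sum_seq_reflect (fun s => fup (pred s)) (S m) m). }
    f_equal. apply map_ext_in.
    intros t Ht%in_seq. replace t with (2 * m - (2 * m - t)) at 1 by lia.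
    rewrite Hup by lia. f_equal. lia.
Qed.

Lemma sum_layer_sizes (m : nat) :
  3 * (list_sum (map (fun t => (t + 1) * (t + 1)) (seq 0 (S m)))
       + list_sum (map (fun i => (i + 1) * (i + 1)) (seq 0 m))) =
  (m + 1) * (2 * (m + 1) * (m + 1) + 1).
Proof.
  induction m as [| m IH]; [reflexivity |].
  rewrite (seq_S m 0), (seq_S (S m) 0), !map_app, !list_sum_app. cbn [map list_sum fold_right].
  rewrite !Nat.add_0_l, !Nat.add_0_r, Nat.add_shuffle1, Nat.mul_add_distr_l, IH. ring.
Qed.

Lemma sum_layer_contacts (m : nat) :
  list_sum (map (fun t => 2 * (t + 1) * t + 2 * t * (2 * t)) (seq 0 (S m)))
  + list_sum (map (fun i => 2 * (i + 1) * i + 2 * (i + 1) * (2 * (i + 1))) (seq 0 m)) =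
  2 * m * (m + 1) * (2 * m + 1).
Proof.
  induction m as [| m IH]; [reflexivity |].
  rewrite (seq_S m 0), (seq_S (S m) 0), !map_app, !list_sum_app. cbn [map list_sum fold_right].
  rewrite !Nat.add_0_l, !Nat.add_0_r, Nat.add_shuffle1, IH. ring.
Qed.

Definition zrange (lo hi : Z) : list Z :=
  map (fun i => (lo + Z.of_nat i)%Z) (seq 0 (Z.to_nat (hi - lo + 1))).

Definition zmem (lo hi z : Z) : bool := (lo <=? z)%Z && (z <=? hi)%Z.

Lemma zmemP (lo hi z : Z) : reflect (lo <= z <= hi)%Z (zmem lo hi z).
Proof.
  apply iff_reflect. unfold zmem. rewrite andb_true_iff, !Z.leb_le. reflexivity.
Qed.

Lemma zmem_pred (lo hi z : Z) : zmem lo hi (z - 1) = zmem (lo + 1) (hi + 1) z.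
Proof. destruct (zmemP lo hi (z - 1)), (zmemP (lo + 1) (hi + 1) z); lia || reflexivity. Qed.

Lemma in_zrange (lo hi z : Z) : In z (zrange lo hi) <-> (lo <= z <= hi)%Z.
Proof.
  unfold zrange. rewrite in_map_iff. split.
  - intros (i & <- & Hi). apply in_seq in Hi. lia.
  - intros Hz. exists (Z.to_nat (z - lo)). split; [lia | apply in_seq; lia].
Qed.

Lemma length_zrange (lo hi : Z) : length (zrange lo hi) = Z.to_nat (hi - lo + 1).
Proof. unfold zrange. now rewrite length_map, length_seq. Qed.

Definition overlap (lo hi lo' hi' : Z) : nat := Z.to_nat (Z.min hi hi' - Z.max lo lo' + 1).

Lemma list_sum_zmem_zrange (lo hi lo' hi' : Z) :
  list_sum (map (fun z => Nat.b2n (zmem lo' hi' z)) (zrange lo hi)) = overlap lo hi lo' hi'.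
Proof.
  enough (H : forall n, list_sum (map (fun z => Nat.b2n (zmem lo' hi' z))
                 (map (fun i => (lo + Z.of_nat i)%Z) (seq 0 n))) =
               Z.to_nat (Z.min (lo + Z.of_nat n - 1) hi' - Z.max lo lo' + 1)).
  { unfold zrange, overlap. rewrite H. lia. }
  induction n as [| n IH]; [cbn; lia |].
  rewrite seq_S, !map_app, list_sum_app, IH; cbn.
  destruct (zmemP lo' hi' (lo + Z.of_nat n)); cbn; lia.
Qed.

Lemma StronglySorted_app {A} (R : A -> A -> Prop) (l1 l2 : list A) :
  StronglySorted R l1 -> StronglySorted R l2 ->
  (forall y z, In y l1 -> In z l2 -> R y z) -> StronglySorted R (l1 ++ l2).
Proof.
  induction l1 as [| x l1 IH]; intros H1 H2 H12; cbn; [assumption |].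
  apply StronglySorted_inv in H1 as [H1 Hx]. constructor.
  - apply IH; auto; intros; apply H12; cbn; auto.
  - apply Forall_app; split; [assumption |].
    apply Forall_forall; intros; apply H12; cbn; auto.
Qed.

Lemma StronglySorted_map {A B} (R : B -> B -> Prop) (R' : A -> A -> Prop) (f : A -> B) (l : list A) :
  StronglySorted R' l -> (forall x y, R' x y -> R (f x) (f y)) -> StronglySorted R (map f l).
Proof.
  intros Hl Hf. induction Hl as [| x l _ IH Hx]; cbn; constructor; [assumption |].
  apply Forall_map. eapply Forall_impl; [| exact Hx]. auto.
Qed.

Lemma StronglySorted_flat_map {A B} (R : B -> B -> Prop) (R' : A -> A -> Prop) (F : A -> list B) (l : list A) :
  StronglySorted R' l -> (forall x, StronglySorted R (F x)) ->
  (forall x x' y y', R' x x' -> In y (F x) -> In y' (F x') -> R y y') ->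
  StronglySorted R (flat_map F l).
Proof.
  intros Hl HF HFF. induction Hl as [| x l _ IH Hx]; cbn; [constructor |].
  apply StronglySorted_app; auto.
  intros y y' Hy Hy'. apply in_flat_map in Hy' as (x' & Hx' & Hy').
  rewrite Forall_forall in Hx. eauto.
Qed.

Lemma StronglySorted_NoDup {A} (R : A -> A -> Prop) (l : list A) :
  (forall x, ~ R x x) -> StronglySorted R l -> NoDup l.
Proof.
  intros Hirr Hl. induction Hl as [| x l _ IH Hx]; constructor; [| assumption].
  rewrite Forall_forall in Hx. intros Hin. exact (Hirr x (Hx x Hin)).
Qed.

Lemma StronglySorted_in_prefix {A} (R : A -> A -> Prop) (P S : list A) (x y : A) :
  (forall u v, R u v -> ~ R v u) -> StronglySorted R (P ++ x :: S) ->
  In y (P ++ x :: S) -> R y x -> In y P.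
Proof.
  intros Hasym HL Hy Hyx. apply in_app_or in Hy as [Hy | Hy]; [assumption | exfalso].
  induction P as [| z P IH]; cbn in HL.
  - apply StronglySorted_inv in HL as [_ Hx]. rewrite Forall_forall in Hx.
    destruct Hy as [<- | Hy]; [exact (Hasym _ _ Hyx Hyx) | exact (Hasym _ _ Hyx (Hx y Hy))].
  - apply IH. now apply StronglySorted_inv in HL.
Qed.

Lemma StronglySorted_seq (s n : nat) : StronglySorted lt (seq s n).
Proof.
  revert s. induction n as [| n IH]; intros s; cbn; constructor; [apply IH |].
  apply Forall_forall. intros x Hx. apply in_seq in Hx. lia.
Qed.

Lemma StronglySorted_zrange (lo hi : Z) : StronglySorted Z.lt (zrange lo hi).
Proof. apply (StronglySorted_map _ lt); [apply StronglySorted_seq | intros; lia]. Qed.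

Definition zlex_lt (y x : zpt) : Prop :=
  let '(a, b, t) := y in let '(a', b', t') := x in
  (t < t' \/ t = t' /\ (a < a' \/ a = a' /\ b < b'))%Z.

Lemma zlex_lt_asym (x y : zpt) : zlex_lt x y -> ~ zlex_lt y x.
Proof. destruct x as [[a b] t], y as [[a' b'] t']; cbn; lia. Qed.

(* The six minimal vectors of the lattice that are positive for [zlex_lt]; the other six
   are their opposites. *)
Definition fcc_pos_units : list zpt :=
  [(1, 0, 0); (0, 1, 0); (0, 0, 1); (0, 1, 1); (1, 0, 1); (1, 1, 1)]%Z.

Lemma fcc_pos_units_spec (x d : zpt) : In d fcc_pos_units ->
  fcc_sqnorm (zsub (zsub x d) x) = 2%Z /\ zlex_lt (zsub x d) x.
Proof.
  destruct x as [[a b] t]. intros Hd.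
  repeat (destruct Hd as [<- | Hd]; [cbn; split; [ring | lia] |]). destruct Hd.
Qed.

Section Octahedron.

Variable m : nat.

(* In the coordinates of [fcc], the octahedron with [m + 1] balls along each edge is
   {(a, b, t) | 0 <= a, b <= m, a <= t <= a + m, b <= t <= b + m}; its slice at height [t]
   is the square [layer_lo t, layer_hi t]^2, empty unless 0 <= t <= 2 m. *)
Definition layer_lo (t : Z) : Z := Z.max 0 (t - Z.of_nat m).
Definition layer_hi (t : Z) : Z := Z.min (Z.of_nat m) t.

Definition layer_range (t : Z) : list Z := zrange (layer_lo t) (layer_hi t).

Definition layer (t : Z) : list zpt :=
  flat_map (fun a => map (fun b => (a, b, t)) (layer_range t)) (layer_range t).

Definition octahedron : list zpt := flat_map (fun t => layer (Z.of_nat t)) (seq 0 (2 * m + 1)).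

Definition in_octahedron (x : zpt) : bool :=
  let '(a, b, t) := x in zmem (layer_lo t) (layer_hi t) a && zmem (layer_lo t) (layer_hi t) b.

Lemma in_layer (a b t : Z) :
  zmem (layer_lo t) (layer_hi t) a = true -> zmem (layer_lo t) (layer_hi t) b = true ->
  In (a, b, t) (layer t).
Proof.
  intros Ha%(reflect_iff _ _ (zmemP _ _ _)) Hb%(reflect_iff _ _ (zmemP _ _ _)).
  apply in_flat_map. exists a. split; [apply in_zrange; lia |].
  apply in_map_iff. exists b. split; [reflexivity | apply in_zrange; lia].
Qed.

Lemma in_octahedron_In (x : zpt) : in_octahedron x = true -> In x octahedron.
Proof.
  destruct x as [[a b] t]; cbn. intros [Ha Hb]%andb_true_iff.
  assert (Ht : (0 <= t <= 2 * Z.of_nat m)%Z)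
    by (destruct (zmemP (layer_lo t) (layer_hi t) a); unfold layer_lo, layer_hi in *; lia || discriminate).
  apply in_flat_map. exists (Z.to_nat t). split; [apply in_seq; lia |].
  rewrite Z2Nat.id by lia. now apply in_layer.
Qed.

Lemma layer_sorted (t : Z) : StronglySorted zlex_lt (layer t).
Proof.
  apply (StronglySorted_flat_map _ Z.lt); [apply StronglySorted_zrange | |].
  - intros a. apply (StronglySorted_map _ Z.lt); [apply StronglySorted_zrange |].
    intros b b' Hb. cbn. lia.
  - intros a a' y y' Ha (b & <- & _)%in_map_iff (b' & <- & _)%in_map_iff. cbn. lia.
Qed.

Lemma octahedron_sorted : StronglySorted zlex_lt octahedron.
Proof.
  apply (StronglySorted_flat_map _ lt); [apply StronglySorted_seq | intros; apply layer_sorted |].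
  intros t t' y y' Ht Hy Hy'.
  apply in_flat_map in Hy as (a & _ & (b & <- & _)%in_map_iff).
  apply in_flat_map in Hy' as (a' & _ & (b' & <- & _)%in_map_iff).
  cbn. lia.
Qed.

Definition earlier_neighbours (x : zpt) : list zpt :=
  filter in_octahedron (map (zsub x) fcc_pos_units).

Lemma earlier_neighbours_NoDup (x : zpt) : NoDup (earlier_neighbours x).
Proof.
  apply NoDup_filter, NoDup_map_NoDup_ForallPairs.
  - destruct x as [[a b] t]. intros [[p q] r] [[p' q'] r'] _ _ E. cbn in E. injection E as E1 E2 E3.
    f_equal; [f_equal |]; lia.
  - repeat constructor; cbn; intuition discriminate.
Qed.

(* Two of the six candidates lie in the layer of [x]; the other four lie in the layer below,
   and whether they belong to it is decided coordinatewise, whence the product. *)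
Lemma length_earlier_neighbours (a b t : Z) :
  zmem (layer_lo t) (layer_hi t) a = true -> zmem (layer_lo t) (layer_hi t) b = true ->
  let w z := Nat.b2n (zmem (layer_lo (t - 1)) (layer_hi (t - 1)) z)
             + Nat.b2n (zmem (layer_lo (t - 1) + 1) (layer_hi (t - 1) + 1) z) in
  length (earlier_neighbours (a, b, t)) =
  Nat.b2n (zmem (layer_lo t + 1) (layer_hi t + 1) a)
  + Nat.b2n (zmem (layer_lo t + 1) (layer_hi t + 1) b) + w a * w b.
Proof.
  intros Ha Hb w. unfold w, earlier_neighbours.
  cbn [map zsub fcc_pos_units filter in_octahedron].
  rewrite !Z.sub_0_r, !zmem_pred, Ha, Hb.
  destruct (zmem (layer_lo t + 1) _ a), (zmem (layer_lo t + 1) _ b),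
    (zmem (layer_lo (t - 1)) _ a), (zmem (layer_lo (t - 1)) _ b),
    (zmem (layer_lo (t - 1) + 1) _ a), (zmem (layer_lo (t - 1) + 1) _ b); reflexivity.
Qed.

Lemma list_sum_layer (g : zpt -> nat) (t : Z) :
  list_sum (map g (layer t)) =
  list_sum (map (fun a => list_sum (map (fun b => g (a, b, t)) (layer_range t))) (layer_range t)).
Proof.
  unfold layer. rewrite list_sum_flat_map. f_equal. apply map_ext. intros a. now rewrite map_map.
Qed.

Lemma length_layer (t : Z) (s : nat) :
  Z.to_nat (layer_hi t - layer_lo t + 1) = s -> length (layer t) = s * s.
Proof.
  intros Hs. unfold layer. rewrite (flat_map_constant_length (c := s)).
  - unfold layer_range. now rewrite length_zrange, Hs.
  - intros a _. unfold layer_range. now rewrite length_map, length_zrange, Hs.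
Qed.

Lemma list_sum_earlier_neighbours_layer (t : Z) (s u w : nat) :
  let lo := layer_lo t in let hi := layer_hi t in
  Z.to_nat (hi - lo + 1) = s ->
  overlap lo hi (lo + 1) (hi + 1) = u ->
  overlap lo hi (layer_lo (t - 1)) (layer_hi (t - 1))
  + overlap lo hi (layer_lo (t - 1) + 1) (layer_hi (t - 1) + 1) = w ->
  list_sum (map (fun x => length (earlier_neighbours x)) (layer t)) = 2 * s * u + w * w.
Proof.
  intros lo hi Hs Hu Hw. rewrite list_sum_layer.
  assert (Hmem : forall z, In z (layer_range t) -> zmem lo hi z = true)
    by (intros z Hz%in_zrange; now apply (reflect_iff _ _ (zmemP _ _ _))).
  set (f z := Nat.b2n (zmem (lo + 1) (hi + 1) z)).
  set (g z := Nat.b2n (zmem (layer_lo (t - 1)) (layer_hi (t - 1)) z)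
              + Nat.b2n (zmem (layer_lo (t - 1) + 1) (layer_hi (t - 1) + 1) z)).
  rewrite (map_ext_in _ (fun a => list_sum (map (fun b => f a + f b + g a * g b) (layer_range t)))).
  2:{ intros a Ha. f_equal. apply map_ext_in. intros b Hb.
      apply length_earlier_neighbours; apply Hmem; assumption. }
  rewrite list_sum_square. unfold layer_range, f. rewrite length_zrange, list_sum_zmem_zrange.
  rewrite (map_ext g (fun z => 0 + 1 * Nat.b2n (zmem (layer_lo (t - 1)) (layer_hi (t - 1)) z)
     + 1 * Nat.b2n (zmem (layer_lo (t - 1) + 1) (layer_hi (t - 1) + 1) z))) by (intros; unfold g; lia).
  rewrite list_sum_map_linear, !list_sum_zmem_zrange. subst lo hi. lia.
Qed.

Lemma length_octahedron : 3 * length octahedron = (m + 1) * (2 * (m + 1) * (m + 1) + 1).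
Proof.
  unfold octahedron. rewrite length_flat_map.
  rewrite (list_sum_seq_split _ (fun t => (t + 1) * (t + 1)) (fun i => (i + 1) * (i + 1))).
  - apply sum_layer_sizes.
  - intros t Ht. apply length_layer. unfold layer_lo, layer_hi. lia.
  - intros i Hi. apply length_layer. unfold layer_lo, layer_hi. lia.
Qed.

Lemma list_sum_earlier_neighbours_octahedron :
  list_sum (map (fun x => length (earlier_neighbours x)) octahedron) = 2 * m * (m + 1) * (2 * m + 1).
Proof.
  unfold octahedron. rewrite list_sum_flat_map.
  rewrite (list_sum_seq_split _ (fun t => 2 * (t + 1) * t + 2 * t * (2 * t))
             (fun i => 2 * (i + 1) * i + 2 * (i + 1) * (2 * (i + 1)))).
  - apply sum_layer_contacts.
  - intros t Ht. apply list_sum_earlier_neighbours_layer; unfold overlap, layer_lo, layer_hi; lia.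
  - intros i Hi. apply list_sum_earlier_neighbours_layer; unfold overlap, layer_lo, layer_hi; lia.
Qed.

Lemma octahedron_packing :
  is_packing (length octahedron) (fun i => fcc (nth i octahedron zero)).
Proof.
  intros i j Hi Hj Hij. apply dist3_fcc_ge2. intros E. apply Hij.
  refine (proj1 (NoDup_nth _ zero) _ i j Hi Hj E).
  apply (StronglySorted_NoDup zlex_lt); [| apply octahedron_sorted].
  intros x Hx. exact (zlex_lt_asym _ _ Hx Hx).
Qed.

Lemma octahedron_contact_number :
  2 * m * (m + 1) * (2 * m + 1) <=
  contact_number (length octahedron) (fun i => fcc (nth i octahedron zero)).
Proof.
  rewrite <- list_sum_earlier_neighbours_octahedron. apply contact_number_ge.
  intros P x S HL. split; [apply earlier_neighbours_NoDup | split].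
  - intros y (Hy & Hin)%filter_In. apply in_map_iff in Hy as (d & <- & Hd).
    apply (StronglySorted_in_prefix zlex_lt P S x); [apply zlex_lt_asym | | |].
    + rewrite <- HL. apply octahedron_sorted.
    + rewrite <- HL. now apply in_octahedron_In.
    + now apply fcc_pos_units_spec.
  - intros y (Hy & _)%filter_In. apply in_map_iff in Hy as (d & <- & Hd).
    now apply touch_fcc, fcc_pos_units_spec.
Qed.

End Octahedron.

Local Open Scope R_scope.

Lemma Rpower_cube (x y : R) : 0 < x -> Rpower x y ^ 3 = Rpower x (3 * y).
Proof.
  intros Hx. rewrite <- Rpower_pow by apply exp_pos. rewrite Rpower_mult. f_equal. cbn. ring.
Qed.

Lemma lt_cbrt_mul_pow23 (c x y : R) :
  0 < c -> 0 < y -> x ^ 3 < c * y ^ 2 -> x < Rpower c (1 / 3) * Rpower y (2 / 3).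
Proof.
  intros Hc Hy Hxy. set (p := Rpower c (1 / 3) * Rpower y (2 / 3)).
  assert (Hp3 : p ^ 3 = c * y ^ 2).
  { unfold p. rewrite Rpow_mult_distr, !Rpower_cube by assumption.
    replace (3 * (1 / 3)) with 1 by field. replace (3 * (2 / 3)) with (INR 2) by (cbn; field).
    now rewrite Rpower_1, Rpower_pow. }
  assert (Hp : 0 < p) by (apply Rmult_lt_0_compat; apply exp_pos).
  destruct (Rlt_le_dec x p) as [| Hpx]; [assumption | exfalso].
  pose proof (pow_incr p x 3 (conj (Rlt_le _ _ Hp) Hpx)). lra.
Qed.

Lemma octahedral_cube_lt (k n : nat) :
  (1 <= k)%nat -> (3 * n = k * (2 * k * k + 1))%nat -> (6 * INR k ^ 2) ^ 3 < 486 * INR n ^ 2.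
Proof.
  intros Hk Hn.
  assert (Hsq : (9 * (n * n) = k * (2 * k * k + 1) * (k * (2 * k * k + 1)))%nat)
    by (rewrite <- Hn; ring).
  assert (H : (216 * (k * k * k * (k * k * k)) < 486 * (n * n))%nat) by nia.
  apply lt_INR in H. rewrite !mult_INR in H.
  replace (INR 216) with 216 in H by (cbn; ring). replace (INR 486) with 486 in H by (cbn; ring).
  replace ((6 * INR k ^ 2) ^ 3) with (216 * (INR k * INR k * INR k * (INR k * INR k * INR k))) by ring.
  replace (INR n ^ 2) with (INR n * INR n) by ring. exact H.
Qed.

Lemma octahedral_contacts_lower_bound (k n c : nat) :
  (1 <= k)%nat -> (3 * n = k * (2 * k * k + 1))%nat ->
  (2 * (k - 1) * k * (2 * (k - 1) + 1) <= c)%nat ->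
  6 * INR n - Rpower 486 (1 / 3) * Rpower (INR n) (2 / 3) < INR c.
Proof.
  intros Hk Hn Hc.
  assert (Hn0 : (0 < n)%nat) by nia.
  set (B := (2 * (k - 1) * k * (2 * (k - 1) + 1))%nat) in Hc.
  assert (H6n : (6 * n = B + 6 * (k * k))%nat).
  { replace (6 * n)%nat with (2 * (3 * n))%nat by ring. rewrite Hn. unfold B.
    destruct k as [| j]; [lia |]. rewrite Nat.sub_succ, Nat.sub_0_r. ring. }
  pose proof (lt_cbrt_mul_pow23 486 _ _ ltac:(lra) (lt_0_INR _ Hn0) (octahedral_cube_lt k n Hk Hn))
    as Hk2.
  apply le_INR in Hc. apply (f_equal INR) in H6n. rewrite plus_INR, !mult_INR in H6n.
  replace (INR 6) with 6 in H6n by (cbn; ring). nra.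
Qed.

Theorem theorem1 :
  forall k n : nat, (2 <= k)%nat -> (3 * n = k * (2 * k * k + 1))%nat ->
  exists c cfcc : nat,
    is_C n c /\ is_Cfcc n cfcc /\
    6 * INR n - Rpower 486 (1 / 3) * Rpower (INR n) (2 / 3) < INR cfcc /\
    (cfcc <= c)%nat.
Proof.
  intros k n Hk Hn.
  set (m := (k - 1)%nat).
  set (f i := fcc (nth i (octahedron m) zero)).
  assert (Hlen : length (octahedron m) = n)
    by (pose proof (length_octahedron m); replace (m + 1)%nat with k in * by lia; lia).
  assert (Hpack : is_packing n f) by (rewrite <- Hlen; apply octahedron_packing).
  assert (Hfcc : forall i, (i < n)%nat -> in_fcc (f i)) by (intros; apply in_fcc_fcc).
  assert (Hf : (2 * m * (m + 1) * (2 * m + 1) <= contact_number n f)%nat)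
    by (rewrite <- Hlen; apply octahedron_contact_number).
  destruct (max_contact_number_exists n (fun _ => True) f) as (c & (g & Hg & _ & Hgc) & Hc); auto.
  destruct (max_contact_number_exists n (fun g => forall i, (i < n)%nat -> in_fcc (g i)) f)
    as (cf & (h & Hh & Hhfcc & Hhc) & Hcf); auto.
  exists c, cf. split; [split; eauto | split; [split; eauto | split]].
  - apply octahedral_contacts_lower_bound with k; [lia | assumption |].
    replace (m + 1)%nat with k in Hf by lia. exact (Nat.le_trans _ _ _ Hf (Hcf f Hpack Hfcc)).
  - rewrite <- Hhc. apply Hc; auto.
Qed.
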